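(* Let $N$ be a finitely generated torsion-free nilpotent group and let $\phi\in\mathrm{Aut}(N)$ be such that the induced automorphism of $H_1(N,\mathbb{Q})$ is unipotent. Then $K_{\phi}=1$.
   Context: For a finitely generated group $G$ with finite generating set $S$, $\ell=\ell_S$ denotes word length with respect to $S$. For $\phi\in\mathrm{Aut}(G)$, the entropy of $\phi$ is $K_{\phi}=\max_{s\in S}\lim_{n\to\infty}\ell(\phi^n(s))^{1/n}$; it is independent of $S$. A linear automorphism $A$ is unipotent if $A-I$ is nilpotent. *)

From Stdlib Require Import Reals List Arith.
Open Scope R_scope.

Record is_group (G : Type) (mul : G -> G -> G) (inv : G -> G) (one : G) : Prop := {
  grp_assoc : forall x y z, mul x (mul y z) = mul (mul x y) z;
  grp_mul1l : forall x, mul one x = x;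
  grp_mul1r : forall x, mul x one = x;
  grp_mulVl : forall x, mul (inv x) x = one;
  grp_mulVr : forall x, mul x (inv x) = one
}.

Section GroupNotions.
Variables (G : Type) (mul : G -> G -> G) (inv : G -> G) (one : G).

Fixpoint gpow (x : G) (n : nat) : G :=
  match n with O => one | S k => mul x (gpow x k) end.

Definition gcomm (x y : G) : G := mul (mul (inv x) (inv y)) (mul x y).

Inductive gen (P : G -> Prop) : G -> Prop :=
| gen_base : forall x, P x -> gen P x
| gen_one : gen P one
| gen_mul : forall x y, gen P x -> gen P y -> gen P (mul x y)
| gen_inv : forall x, gen P x -> gen P (inv x).

Fixpoint lcs (i : nat) : G -> Prop :=
  match i with
  | O => fun _ => True
  | S k => gen (fun z => exists x y, lcs k y /\ z = gcomm x y)
  end.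

Definition nilpotent : Prop := exists c, forall x, lcs c x -> x = one.

Definition torsion_free : Prop :=
  forall x n, (0 < n)%nat -> gpow x n = one -> x = one.

Definition generates (S : list G) : Prop := forall g, gen (fun x => In x S) g.

Definition is_automorphism (phi : G -> G) : Prop :=
  (forall x y, phi (mul x y) = mul (phi x) (phi y)) /\
  (forall x y, phi x = phi y -> x = y) /\
  (forall y, exists x, phi x = y).

(* Words over S ∪ S^{-1}: a letter (b, s) stands for s (b = true) or s^-1. *)
Definition eval_word (w : list (prod bool G)) : G :=
  fold_right (fun (l : prod bool G) (acc : G) => mul (if fst l then snd l else inv (snd l)) acc) one w.

Definition word_over (S : list G) (w : list (prod bool G)) : Prop :=
  forall l : prod bool G, In l w -> In (snd l) S.

Definition is_word_length (S : list G) (g : G) (n : nat) : Prop :=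
  (exists w, word_over S w /\ eval_word w = g /\ length w = n) /\
  (forall w, word_over S w -> eval_word w = g -> (n <= length w)%nat).

(* The induced map of phi on H_1(N,Q) = N^ab ⊗ Q is unipotent, i.e.
   (phi_* - 1)^k = 0 on N^ab ⊗ Q for some k.  In multiplicative notation
   (phi_* - 1) is induced by x |-> phi(x) x^-1 on N^ab, and an element of
   N^ab vanishes in N^ab ⊗ Q iff it is torsion, i.e. some positive power of
   a representative lies in [N,N] = lcs 1. *)
Definition H1Q_unipotent (phi : G -> G) : Prop :=
  exists k : nat, forall x : G,
    exists m : nat, (0 < m)%nat /\
      lcs 1 (gpow (Nat.iter k (fun y => mul (phi y) (inv y)) x) m).

End GroupNotions.

Arguments gpow {G} mul one x n.
Arguments gcomm {G} mul inv x y.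
Arguments gen {G} mul inv one P _.
Arguments lcs {G} mul inv one i _.
Arguments nilpotent {G} mul inv one.
Arguments torsion_free {G} mul one.
Arguments generates {G} mul inv one S.
Arguments is_automorphism {G} mul phi.
Arguments eval_word {G} mul inv one w.
Arguments word_over {G} S w.
Arguments is_word_length {G} mul inv one S g n.
Arguments H1Q_unipotent {G} mul inv one phi.
Arguments is_group {G} mul inv one.

(* Write [δ_f x = f x ⋅ x⁻¹], the multiplicative form of [f - 1], and [γ i] for the lower
   central series indexed from [γ 0 = N], so [γ 1 = [N, N]]. Unipotence of [φ] on
   [H_1(N, Q)] says that [δ_φ^k] maps [N] into the torsion of [N/γ 1]. That image is a finite
   set permuted by [φ], so a power [ψ = φ^p] fixes it and [δ_ψ^(k+1)] maps [N] into [γ 1].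
   Since [δ [a, b] ≡ [δ a, δ b] [δ a, b] [a, δ b]] modulo [γ (i+2)] for [b ∈ γ i], such a bound
   descends along the lower central series, and nilpotency gives [δ_ψ^R = 1]. Then
   [ψ^(n+1) x = ψ^n (δ_ψ x) ⋅ ψ^n x] bounds the word length of [ψ^n x], hence of [φ^n s],
   by a polynomial in [n], and the [n]-th root of a polynomially bounded sequence tends to 1. *)

From Stdlib Require Import Reals List Arith Lia Lra Setoid Morphisms
  IndefiniteDescription Classical_Prop.
From Coquelicot Require Import Coquelicot.
Local Open Scope nat_scope.

#[local] Instance iter_proper {A} (R : relation A) (f : A -> A) n :
  Proper (R ==> R) f -> Proper (R ==> R) (Nat.iter n f).
Proof. intros hf x y h. induction n as [|n IH]; [exact h | now apply hf]. Qed.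

Fixpoint tuples {A} (xs : list A) (n : nat) : list (list A) :=
  match n with
  | 0 => nil :: nil
  | S n => flat_map (fun t => map (fun x => x :: t) xs) (tuples xs n)
  end.

Lemma tuples_complete {A} (xs : list A) n t :
  length t = n -> (forall x, In x t -> In x xs) -> In t (tuples xs n).
Proof.
  intros <-. induction t as [|x t IH]; intros h; simpl; [now left|].
  apply in_flat_map. exists t. split; [apply IH; intros; apply h; now right|].
  apply in_map_iff. exists x. split; [reflexivity | apply h; now left].
Qed.

Lemma pigeonhole {A} (E : nat -> A) (V : list A) :
  (forall n, In (E n) V) -> exists n1 n2, n1 < n2 /\ E n1 = E n2.
Proof.
  intros hE. apply NNPP. intros hne.
  assert (hnd : NoDup (map E (seq 0 (S (length V))))).
  { apply NoDup_map_NoDup_ForallPairs; [|apply seq_NoDup].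
    intros a b _ _ hab. destruct (lt_eq_lt_dec a b) as [[h|h]|h]; [| exact h |];
      exfalso; apply hne; [exists a, b | exists b, a]; auto. }
  apply NoDup_incl_length with (l' := V) in hnd.
  - rewrite length_map, length_seq in hnd. lia.
  - intros v hv. apply in_map_iff in hv as [n [<- _]]. apply hE.
Qed.

Lemma iter_fixed {A} (f : A -> A) a n : f a = a -> Nat.iter n f a = a.
Proof. intros h. induction n as [|n IH]; simpl; [reflexivity | now rewrite IH]. Qed.

Lemma iter_mul_add {A} (g : A -> A) p q r x :
  Nat.iter (q * p + r) g x = Nat.iter q (Nat.iter p g) (Nat.iter r g x).
Proof.
  induction q as [|q IH]; [reflexivity|].
  replace (S q * p + r) with (p + (q * p + r)) by lia. now rewrite Nat.iter_add, IH.
Qed.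

Lemma uniform_bound_lt (P : nat -> nat -> Prop) :
  (forall r C C', C <= C' -> P r C -> P r C') -> (forall r, exists C, P r C) ->
  forall p, exists C, forall r, r < p -> P r C.
Proof.
  intros hmono h p. induction p as [|p [C hC]]; [exists 0; intros; lia|].
  destruct (h p) as [C' hC']. exists (C + C'). intros r hr.
  destruct (Nat.eq_dec r p) as [->|hne].
  - apply (hmono _ C'); [lia | exact hC'].
  - apply (hmono _ C); [lia | apply hC; lia].
Qed.

Section Group.
Variables (G : Type) (mul : G -> G -> G) (inv : G -> G) (one : G).
Hypothesis HG : is_group mul inv one.
Local Infix "⋅" := mul (at level 40, left associativity).
Local Notation "[~ x , y ]" := (gcomm mul inv x y).
Local Notation "x ^+ n" := (gpow mul one x n) (at level 29, left associativity).
Local Notation γ := (lcs mul inv one).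

Lemma mulgA x y z : x ⋅ (y ⋅ z) = x ⋅ y ⋅ z. Proof. exact (grp_assoc _ _ _ _ HG x y z). Qed.
Lemma mul1g x : one ⋅ x = x. Proof. exact (grp_mul1l _ _ _ _ HG x). Qed.
Lemma mulg1 x : x ⋅ one = x. Proof. exact (grp_mul1r _ _ _ _ HG x). Qed.
Lemma mulVg x : inv x ⋅ x = one. Proof. exact (grp_mulVl _ _ _ _ HG x). Qed.
Lemma mulgV x : x ⋅ inv x = one. Proof. exact (grp_mulVr _ _ _ _ HG x). Qed.

Lemma mulKg x y : inv x ⋅ (x ⋅ y) = y. Proof. now rewrite mulgA, mulVg, mul1g. Qed.
Lemma mulKVg x y : x ⋅ (inv x ⋅ y) = y. Proof. now rewrite mulgA, mulgV, mul1g. Qed.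

Lemma mulg_eq1_inv x y : x ⋅ y = one -> y = inv x.
Proof. intros h. now rewrite <- (mulKg x y), h, mulg1. Qed.
Lemma invgK x : inv (inv x) = x.
Proof. symmetry. apply mulg_eq1_inv, mulVg. Qed.
Lemma invMg x y : inv (x ⋅ y) = inv y ⋅ inv x.
Proof. symmetry. apply mulg_eq1_inv. now rewrite <- mulgA, (mulgA y), mulgV, mul1g, mulgV. Qed.
Lemma invg1 : inv one = one.
Proof. symmetry. apply mulg_eq1_inv, mul1g. Qed.
Lemma mulgI a x y : a ⋅ x = a ⋅ y -> x = y.
Proof. intros h. now rewrite <- (mulKg a x), h, mulKg. Qed.

Ltac gsimpl := repeat progress rewrite ?invMg, ?invgK, ?invg1, <- ?mulgA,
  ?mulKg, ?mulKVg, ?mulVg, ?mulgV, ?mul1g, ?mulg1.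

Lemma gpowD x a b : x ^+ (a + b) = x ^+ a ⋅ x ^+ b.
Proof. induction a as [|a IH]; simpl; [now rewrite mul1g | now rewrite IH, mulgA]. Qed.
Lemma gpowM x a b : x ^+ (a * b) = (x ^+ b) ^+ a.
Proof. induction a as [|a IH]; simpl; [reflexivity | now rewrite gpowD, IH]. Qed.

(** * Lower central series *)

Record normal (H : G -> Prop) : Prop := {
  normal_one : H one;
  normal_mul : forall x y, H x -> H y -> H (x ⋅ y);
  normal_inv : forall x, H x -> H (inv x);
  normal_conj : forall g x, H x -> H (inv g ⋅ x ⋅ g) }.

Lemma gen_closed (P Q : G -> Prop) :
  (forall x, P x -> Q x) -> Q one -> (forall x y, Q x -> Q y -> Q (x ⋅ y)) ->
  (forall x, Q x -> Q (inv x)) -> forall x, gen mul inv one P x -> Q x.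
Proof. intros hP h1 hM hV x hx. induction hx; auto. Qed.

Lemma gen_normal (P : G -> Prop) :
  (forall g x, P x -> gen mul inv one P (inv g ⋅ x ⋅ g)) -> normal (gen mul inv one P).
Proof.
  intros hP. split; [apply gen_one | intros; now apply gen_mul | intros; now apply gen_inv |].
  intros g x hx. induction hx as [x hx| |x y _ IHx _ IHy|x _ IHx].
  - now apply hP.
  - rewrite mulg1, mulVg. apply gen_one.
  - replace (inv g ⋅ (x ⋅ y) ⋅ g) with ((inv g ⋅ x ⋅ g) ⋅ (inv g ⋅ y ⋅ g)) by (gsimpl; reflexivity).
    now apply gen_mul.
  - replace (inv g ⋅ inv x ⋅ g) with (inv (inv g ⋅ x ⋅ g)) by (gsimpl; reflexivity).
    now apply gen_inv.
Qed.

Lemma conjg_comm g x y : inv g ⋅ [~ x, y] ⋅ g = [~ inv g ⋅ x ⋅ g, inv g ⋅ y ⋅ g].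
Proof. unfold gcomm. gsimpl. reflexivity. Qed.

Lemma lcs_normal i : normal (γ i).
Proof.
  induction i as [|i IH]; [split; simpl; auto|].
  apply gen_normal. intros g z [x [y [hy ->]]]. constructor.
  exists (inv g ⋅ x ⋅ g), (inv g ⋅ y ⋅ g). split; [now apply normal_conj | apply conjg_comm].
Qed.

Lemma lcs_one i : γ i one. Proof. apply lcs_normal. Qed.
Lemma lcs_mul i x y : γ i x -> γ i y -> γ i (x ⋅ y). Proof. apply lcs_normal. Qed.
Lemma lcs_inv i x : γ i x -> γ i (inv x). Proof. apply lcs_normal. Qed.
Lemma lcs_conj i g x : γ i x -> γ i (inv g ⋅ x ⋅ g). Proof. apply lcs_normal. Qed.
Lemma lcs_conjV i g x : γ i x -> γ i (g ⋅ x ⋅ inv g).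
Proof. intros h. rewrite <- (invgK g) at 1. now apply lcs_conj. Qed.

Lemma lcs_comm i x y : γ i y -> γ (S i) [~ x, y].
Proof. intros h. constructor. now exists x, y. Qed.

Lemma lcs_succ i x : γ (S i) x -> γ i x.
Proof.
  revert x. apply gen_closed; [| apply lcs_one | apply lcs_mul | apply lcs_inv].
  intros z [x' [y [hy ->]]]. unfold gcomm.
  replace (inv x' ⋅ inv y ⋅ (x' ⋅ y)) with ((inv x' ⋅ inv y ⋅ x') ⋅ y) by (gsimpl; reflexivity).
  apply lcs_mul, hy. apply lcs_conj, lcs_inv, hy.
Qed.

Definition congr_lcs j x y := γ j (x ⋅ inv y).
Local Notation "x ≡ y [mod j ]" := (congr_lcs j x y)
  (at level 70, y at next level, format "x  ≡  y  [mod  j ]").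

Lemma congr_refl j x : x ≡ x [mod j].
Proof. unfold congr_lcs. rewrite mulgV. apply lcs_one. Qed.
Lemma congr_sym j x y : x ≡ y [mod j] -> y ≡ x [mod j].
Proof. unfold congr_lcs. intros h. apply lcs_inv in h. now rewrite invMg, invgK in h. Qed.
Lemma congr_trans j x y z : x ≡ y [mod j] -> y ≡ z [mod j] -> x ≡ z [mod j].
Proof.
  unfold congr_lcs. intros h1 h2. pose proof (lcs_mul _ _ _ h1 h2) as h.
  now rewrite <- mulgA, mulKg in h.
Qed.

Add Parametric Relation j : G (congr_lcs j)
  reflexivity proved by (congr_refl j)
  symmetry proved by (congr_sym j)
  transitivity proved by (congr_trans j) as congr_lcs_rel.

Add Parametric Morphism j : mul with signature
  congr_lcs j ==> congr_lcs j ==> congr_lcs j as mulg_congr.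
Proof.
  unfold congr_lcs. intros x x' hx y y' hy. rewrite invMg.
  replace (x ⋅ y ⋅ (inv y' ⋅ inv x')) with ((x ⋅ (y ⋅ inv y') ⋅ inv x) ⋅ (x ⋅ inv x'))
    by (gsimpl; reflexivity).
  apply lcs_mul; [apply lcs_conjV|]; assumption.
Qed.

Add Parametric Morphism j : inv with signature
  congr_lcs j ==> congr_lcs j as invg_congr.
Proof.
  unfold congr_lcs. intros x y h. rewrite invgK.
  replace (inv x ⋅ y) with (inv x ⋅ inv (x ⋅ inv y) ⋅ inv (inv x)) by (gsimpl; reflexivity).
  apply lcs_conjV, lcs_inv, h.
Qed.

Lemma congr1_lcs j x : x ≡ one [mod j] <-> γ j x.
Proof. unfold congr_lcs. rewrite invg1, mulg1. tauto. Qed.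

Lemma commute_mod j g w : γ j w -> g ⋅ w ≡ w ⋅ g [mod S j].
Proof.
  intros hw. unfold congr_lcs.
  replace (g ⋅ w ⋅ inv (w ⋅ g)) with [~ inv g, inv w] by (unfold gcomm; gsimpl; reflexivity).
  apply lcs_comm, lcs_inv, hw.
Qed.

Lemma conj_mod j c v : γ j c -> inv v ⋅ c ⋅ v ≡ c [mod S j].
Proof.
  intros h. unfold congr_lcs.
  replace (inv v ⋅ c ⋅ v ⋅ inv c) with [~ v, inv c] by (unfold gcomm; gsimpl; reflexivity).
  apply lcs_comm, lcs_inv, h.
Qed.

Lemma congr1_mul j a b : a ≡ one [mod j] -> b ≡ one [mod j] -> a ⋅ b ≡ one [mod j].
Proof. intros ha hb. now rewrite ha, hb, mulg1. Qed.

Lemma comm1g w : [~ one, w] = one.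
Proof. unfold gcomm. gsimpl. reflexivity. Qed.

Lemma comm_mulg_l i u v w : γ i w -> [~ u ⋅ v, w] ≡ [~ u, w] ⋅ [~ v, w] [mod S (S i)].
Proof.
  intros hw. replace [~ u ⋅ v, w] with ((inv v ⋅ [~ u, w] ⋅ v) ⋅ [~ v, w])
    by (unfold gcomm; gsimpl; reflexivity).
  now rewrite (conj_mod (S i) [~ u, w] v) by now apply lcs_comm.
Qed.

Lemma comm_mulg_r i u v w : γ i v -> [~ u, v ⋅ w] ≡ [~ u, v] ⋅ [~ u, w] [mod S (S i)].
Proof.
  intros hv. replace [~ u, v ⋅ w] with ([~ u, w] ⋅ (inv w ⋅ [~ u, v] ⋅ w))
    by (unfold gcomm; gsimpl; reflexivity).
  rewrite (conj_mod (S i) [~ u, v] w) by now apply lcs_comm.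
  apply commute_mod, lcs_comm, hv.
Qed.

Lemma comm_invg_l i a w : γ i w -> [~ inv a, w] ⋅ [~ a, w] ≡ one [mod S (S i)].
Proof. intros hw. now rewrite <- comm_mulg_l, mulVg, comm1g. Qed.

(* The case [γ 1, γ i] ⊆ γ (i + 2) of the three subgroup lemma. *)
Lemma comm_lcs1 i c w : γ 1 c -> γ i w -> γ (S (S i)) [~ c, w].
Proof.
  intros hc hw. apply congr1_lcs. revert c hc.
  apply gen_closed.
  - intros z [x [y [_ ->]]]. change [~ x, y] with (inv x ⋅ inv y ⋅ (x ⋅ y)).
    rewrite !comm_mulg_l by exact hw.
    rewrite mulgA, <- (mulgA [~ inv x, w] [~ inv y, w]).
    rewrite (commute_mod (S i) [~ inv y, w] [~ x, w]) by now apply lcs_comm.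
    rewrite mulgA, <- mulgA.
    apply congr1_mul; now apply comm_invg_l.
  - now rewrite comm1g.
  - intros x y hx hy. rewrite comm_mulg_l by exact hw. now apply congr1_mul.
  - intros x hx. transitivity ([~ inv x, w] ⋅ [~ x, w]); [now rewrite hx, mulg1|].
    now apply comm_invg_l.
Qed.

(** * The operator [delta f] *)

Class morphism (f : G -> G) : Prop := morphM : forall x y, f (x ⋅ y) = f x ⋅ f y.

Section Morphism.
Context (f : G -> G) `{f_morph : morphism f}.

Lemma morph1 : f one = one.
Proof. apply (mulgI (f one)). now rewrite <- morphM, !mulg1. Qed.
Lemma morphV x : f (inv x) = inv (f x).
Proof. apply mulg_eq1_inv. now rewrite <- morphM, mulgV, morph1. Qed.
Lemma morph_comm x y : f [~ x, y] = [~ f x, f y].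
Proof. unfold gcomm. now rewrite !morphM, !morphV. Qed.

Lemma morph_lcs i x : γ i x -> γ i (f x).
Proof.
  revert x. induction i as [|i IH]; [easy|].
  apply gen_closed.
  - intros z [a [b [hb ->]]]. rewrite morph_comm. now apply lcs_comm, IH.
  - rewrite morph1. apply lcs_one.
  - intros x y hx hy. rewrite morphM. now apply lcs_mul.
  - intros x hx. rewrite morphV. now apply lcs_inv.
Qed.

End Morphism.

#[local] Instance morph_proper f `{morphism f} j : Proper (congr_lcs j ==> congr_lcs j) f.
Proof.
  intros x y. unfold congr_lcs. rewrite <- (morphV f), <- morphM. apply morph_lcs; exact _.
Qed.

#[local] Instance iter_morph f `{morphism f} n : morphism (Nat.iter n f).
Proof. intros x y. induction n as [|n IH]; simpl; [reflexivity | now rewrite IH, morphM]. Qed.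

Lemma iter_inj_neq1 f `{morphism f} n x :
  (forall x y, f x = f y -> x = y) -> x <> one -> Nat.iter n f x <> one.
Proof.
  intros hinj hx. induction n as [|n IH]; [exact hx|]. simpl. intros e.
  apply IH, hinj. now rewrite e, morph1.
Qed.

Definition delta (f : G -> G) x := f x ⋅ inv x.

Lemma delta_commute f g `{morphism g} x :
  (forall y, f (g y) = g (f y)) -> delta f (g x) = g (delta f x).
Proof. intros hfg. unfold delta. now rewrite hfg, (morphM (f := g)), (morphV g). Qed.

Section Delta.
Context (f : G -> G) `{f_morph : morphism f}.
Local Notation δ := (delta f).

Lemma morph_delta x : f x = δ x ⋅ x.
Proof. unfold delta. gsimpl. reflexivity. Qed.

Lemma delta1 : δ one = one.
Proof. unfold delta. now rewrite morph1, invg1, mulg1. Qed.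
Lemma delta_lcs i x : γ i x -> γ i (δ x).
Proof. intros h. now apply lcs_mul, lcs_inv; [apply morph_lcs|]. Qed.

Lemma delta_mul j y z : γ j z -> δ (y ⋅ z) ≡ δ y ⋅ δ z [mod S j].
Proof.
  intros hz. unfold delta at 1. rewrite morphM, invMg.
  replace (f y ⋅ f z ⋅ (inv z ⋅ inv y)) with (f y ⋅ (δ z ⋅ inv y))
    by (unfold delta; gsimpl; reflexivity).
  rewrite <- (commute_mod j (inv y) (δ z)) by now apply delta_lcs.
  now rewrite mulgA.
Qed.

Lemma delta_congr j y y' : y ≡ y' [mod j] -> δ y ≡ δ y' [mod j].
Proof.
  destruct j as [|j]; [easy|]. intros h.
  set (e := inv y ⋅ y').
  assert (he : γ (S j) e).
  { unfold e. replace (inv y ⋅ y') with (inv y ⋅ inv (y ⋅ inv y') ⋅ y) by (gsimpl; reflexivity).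
    now apply lcs_conj, lcs_inv. }
  replace y' with (y ⋅ e) by (unfold e; gsimpl; reflexivity).
  rewrite (delta_mul j y e) by now apply lcs_succ.
  assert (hde : δ e ≡ one [mod S j]) by now apply congr1_lcs, delta_lcs.
  now rewrite hde, mulg1.
Qed.

End Delta.

#[local] Instance delta_proper f `{morphism f} j :
  Proper (congr_lcs j ==> congr_lcs j) (delta f).
Proof. intros x y. exact (delta_congr f j x y). Qed.

Section DeltaIter.
Context (f : G -> G) `{f_morph : morphism f}.
Local Notation δ := (delta f).

Lemma delta_iter1 m : Nat.iter m δ one = one.
Proof. apply iter_fixed, (delta1 f). Qed.
Lemma delta_iter_lcs m i x : γ i x -> γ i (Nat.iter m δ x).
Proof. intros h. induction m as [|m IH]; simpl; [exact h | now apply (delta_lcs f)]. Qed.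

Lemma delta_iter_mul m j y z :
  γ j z -> Nat.iter m δ (y ⋅ z) ≡ Nat.iter m δ y ⋅ Nat.iter m δ z [mod S j].
Proof.
  intros hz. induction m as [|m IH]; simpl; [reflexivity|].
  rewrite IH. apply (delta_mul f), delta_iter_lcs, hz.
Qed.

Lemma delta_iter_inv m j x : γ j x -> Nat.iter m δ (inv x) ≡ inv (Nat.iter m δ x) [mod S j].
Proof.
  intros hx.
  assert (h : one ≡ Nat.iter m δ x ⋅ Nat.iter m δ (inv x) [mod S j]).
  { rewrite <- (delta_iter1 m), <- (mulgV x) at 1. now apply delta_iter_mul, lcs_inv. }
  rewrite <- (mulKg (Nat.iter m δ x) (Nat.iter m δ (inv x))), <- h.
  now rewrite mulg1.
Qed.

Lemma delta_comm i a b : γ i b ->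
  δ [~ a, b] ≡ [~ δ a, δ b] ⋅ [~ δ a, b] ⋅ [~ a, δ b] [mod S (S i)].
Proof.
  intros hb. assert (hdb : γ i (δ b)) by now apply (delta_lcs f).
  unfold delta at 1. rewrite (morph_comm f), (morph_delta f a), (morph_delta f b).
  rewrite comm_mulg_l by now apply lcs_mul.
  rewrite !(comm_mulg_r i) by assumption.
  gsimpl. reflexivity.
Qed.

Section Layer.
Variables (i K0 K : nat).
Hypothesis delta_abelian : forall x, γ 1 (Nat.iter K0 δ x).
Hypothesis delta_layer : forall b, γ i b -> γ (S i) (Nat.iter K δ b).

(* Induction on the budget [m]: each application of [δ] to a commutator advances one of its
   two entries (delta_comm), and an entry that has advanced enough lands one layer deeper. *)
Lemma delta_iter_comm_layer a b : γ i b -> forall m p q, (K0 - p) + (K - q) <= m ->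
  γ (S (S i)) (Nat.iter m δ [~ Nat.iter p δ a, Nat.iter q δ b]).
Proof.
  intros hb.
  assert (ha_deep : forall p, K0 <= p -> γ 1 (Nat.iter p δ a)).
  { intros p hp. replace p with (p - K0 + K0) by lia. rewrite Nat.iter_add.
    apply delta_iter_lcs, delta_abelian. }
  assert (hb_deep : forall q, K <= q -> γ (S i) (Nat.iter q δ b)).
  { intros q hq. replace q with (q - K + K) by lia. rewrite Nat.iter_add.
    apply delta_iter_lcs, delta_layer, hb. }
  assert (hbq : forall q, γ i (Nat.iter q δ b)) by (intros q; now apply delta_iter_lcs).
  intros m. induction m as [|m IH]; intros p q hpq;
    (destruct (le_lt_dec K0 p) as [hp|hp];
       [apply delta_iter_lcs, comm_lcs1; [now apply ha_deep | apply hbq]|]);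
    (destruct (le_lt_dec K q) as [hq|hq]; [now apply delta_iter_lcs, lcs_comm, hb_deep|]);
    [lia|].
  apply congr1_lcs. rewrite Nat.iter_succ_r, (delta_comm i) by apply hbq.
  rewrite !(delta_iter_mul m (S i)) by (apply lcs_comm; try apply (delta_lcs f); apply hbq).
  rewrite <- !Nat.iter_succ.
  apply congr1_mul; [apply congr1_mul|]; apply congr1_lcs, IH; lia.
Qed.

Lemma delta_iter_layer y : γ (S i) y -> γ (S (S i)) (Nat.iter (K0 + K) δ y).
Proof.
  intros hy. enough (γ (S i) y /\ γ (S (S i)) (Nat.iter (K0 + K) δ y)) by tauto.
  revert y hy. apply gen_closed.
  - intros z [a [b [hb ->]]]. split; [now apply lcs_comm|].
    apply (delta_iter_comm_layer a b hb _ 0 0). lia.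
  - rewrite delta_iter1. split; apply lcs_one.
  - intros x y [hx hx'] [hy hy']. split; [now apply lcs_mul|].
    apply congr1_lcs. rewrite (delta_iter_mul _ (S i)) by exact hy.
    apply congr1_mul; now apply congr1_lcs.
  - intros x [hx hx']. split; [now apply lcs_inv|].
    apply congr1_lcs. rewrite (delta_iter_inv _ (S i)) by exact hx.
    apply congr1_lcs in hx'. now rewrite hx', invg1.
Qed.

End Layer.

Lemma delta_iter_lcs_all K0 : (forall x, γ 1 (Nat.iter K0 δ x)) ->
  forall i, exists R, forall x, γ i (Nat.iter R δ x).
Proof.
  intros h0.
  assert (hlayer : forall i, exists K, forall b, γ i b -> γ (S i) (Nat.iter K δ b)).
  { induction i as [|i [K hK]]; [now exists K0|].
    exists (K0 + K). now apply delta_iter_layer. }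
  induction i as [|i [R hR]]; [now exists 0|].
  destruct (hlayer i) as [K hK]. exists (K + R). intros x.
  rewrite Nat.iter_add. apply hK, hR.
Qed.

End DeltaIter.

(** * Finiteness modulo [γ 1] and periodicity *)

Lemma gpow1g n : one ^+ n = one.
Proof. induction n as [|n IH]; simpl; [reflexivity | now rewrite IH, mulg1]. Qed.

Add Parametric Morphism j : (gpow mul one) with signature
  congr_lcs j ==> eq ==> congr_lcs j as gpow_congr.
Proof. intros a b h n. induction n as [|n IH]; simpl; [reflexivity | now apply mulg_congr]. Qed.

Lemma lcs1_gpowM x m n : γ 1 (x ^+ m) -> γ 1 (x ^+ (n * m)).
Proof.
  intros h. apply congr1_lcs in h. apply congr1_lcs.
  now rewrite gpowM, h, gpow1g.
Qed.

Lemma lcs1_uniform_exponent (l : list G) :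
  (forall b, In b l -> exists m, 0 < m /\ γ 1 (b ^+ m)) ->
  exists M, 0 < M /\ forall b, In b l -> γ 1 (b ^+ M).
Proof.
  induction l as [|b0 l IH]; intros h; [exists 1; split; [lia | easy]|].
  destruct IH as [M [hM hl]]; [intros b hb; apply h; now right|].
  destruct (h b0) as [m [hm hb0]]; [now left|].
  exists (M * m). split; [lia|]. intros b [<-|hb].
  - now apply lcs1_gpowM.
  - rewrite Nat.mul_comm. now apply lcs1_gpowM, hl.
Qed.

Lemma gpow_mod M b e : γ 1 (b ^+ M) -> b ^+ e ≡ b ^+ (e mod M) [mod 1].
Proof.
  intros hb. apply congr1_lcs in hb.
  replace e with (e / M * M + e mod M) at 1 by (rewrite Nat.mul_comm; symmetry; apply Nat.div_mod_eq).
  now rewrite gpowD, gpowM, hb, gpow1g, mul1g.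
Qed.

Lemma gpowV_mod M b e : 0 < M -> γ 1 (b ^+ M) -> inv (b ^+ e) ≡ b ^+ (e * (M - 1)) [mod 1].
Proof.
  intros hM hb. apply congr1_lcs in hb.
  assert (he : b ^+ (e * M) ≡ one [mod 1]) by now rewrite gpowM, hb, gpow1g.
  replace (b ^+ (e * (M - 1))) with (inv (b ^+ e) ⋅ b ^+ (e * M)).
  - now rewrite he, mulg1.
  - replace (e * M) with (e + e * (M - 1)) by nia. now rewrite gpowD, mulKg.
Qed.

Fixpoint prod_pows (bs : list G) (es : list nat) : G :=
  match bs, es with
  | b :: bs, e :: es => b ^+ e ⋅ prod_pows bs es
  | _, _ => one
  end.

Fixpoint vec_add (es es' : list nat) : list nat :=
  match es, es' with
  | e :: es, e' :: es' => (e + e') :: vec_add es es'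
  | _, _ => nil
  end.

Lemma length_vec_add es es' : length es = length es' -> length (vec_add es es') = length es.
Proof.
  revert es'. induction es as [|e es IH]; intros [|e' es'] h; simpl in *; try easy.
  f_equal. apply IH. lia.
Qed.

Lemma prod_pows0 bs : prod_pows bs (repeat 0 (length bs)) = one.
Proof. induction bs as [|b bs IH]; simpl; [reflexivity | now rewrite IH, mul1g]. Qed.

Lemma prod_pows_mem bs b : In b bs -> exists es, length es = length bs /\ b = prod_pows bs es.
Proof.
  induction bs as [|b0 bs IH]; [easy|]. intros [<-|h].
  - exists (1 :: repeat 0 (length bs)). simpl. rewrite repeat_length, prod_pows0, !mulg1. auto.
  - destruct (IH h) as [es [he ->]]. exists (0 :: es). simpl. rewrite mul1g. auto.
Qed.

Lemma prod_powsD bs es es' : length es = length bs -> length es' = length bs ->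
  prod_pows bs es ⋅ prod_pows bs es' ≡ prod_pows bs (vec_add es es') [mod 1].
Proof.
  revert es es'. induction bs as [|b bs IH]; intros [|e es] [|e' es'] h h'; try discriminate.
  - simpl. now rewrite mulg1.
  - simpl. rewrite <- mulgA, (mulgA (prod_pows bs es)), (commute_mod 0 _ (b ^+ e')) by easy.
    rewrite <- IH by (simpl in *; lia). now rewrite gpowD, !mulgA.
Qed.

Lemma prod_powsV M bs es : 0 < M -> (forall b, In b bs -> γ 1 (b ^+ M)) ->
  inv (prod_pows bs es) ≡ prod_pows bs (map (fun e => e * (M - 1)) es) [mod 1].
Proof.
  intros hM. revert es. induction bs as [|b bs IH]; intros [|e es] hb; simpl; try now rewrite invg1.
  rewrite invMg, (commute_mod 0) by easy.
  rewrite (gpowV_mod M), IH by (auto; intros; apply hb; now (left + right)). reflexivity.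
Qed.

Lemma prod_pows_mod M bs es : (forall b, In b bs -> γ 1 (b ^+ M)) ->
  prod_pows bs es ≡ prod_pows bs (map (fun e => e mod M) es) [mod 1].
Proof.
  revert es. induction bs as [|b bs IH]; intros [|e es] hb; simpl; try reflexivity.
  rewrite (gpow_mod M b e), IH by (auto; intros; apply hb; now (left + right)). reflexivity.
Qed.

Section Automorphism.
Context (phi : G -> G) `{phi_morph : morphism phi}.
Hypothesis phi_inj : forall x y, phi x = phi y -> x = y.
Hypothesis phi_surj : forall y, exists x, phi x = y.
Local Notation δ := (delta phi).

Lemma lcs1_preimage y : γ 1 y -> exists c, γ 1 c /\ phi c = y.
Proof.
  revert y. apply gen_closed.
  - intros z [x [y [_ ->]]]. destruct (phi_surj x) as [x0 <-], (phi_surj y) as [y0 <-].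
    exists [~ x0, y0]. split; [now apply lcs_comm | apply (morph_comm phi)].
  - exists one. split; [apply lcs_one | apply (morph1 phi)].
  - intros x y [c [hc <-]] [d [hd <-]]. exists (c ⋅ d). split; [now apply lcs_mul | apply morphM].
  - intros x [c [hc <-]]. exists (inv c). split; [now apply lcs_inv | apply (morphV phi)].
Qed.

Lemma iter_congr1_inj n u v : Nat.iter n phi u ≡ Nat.iter n phi v [mod 1] -> u ≡ v [mod 1].
Proof.
  unfold congr_lcs. rewrite <- (morphV (Nat.iter n phi)), <- morphM. generalize (u ⋅ inv v).
  induction n as [|n IH]; intros y h; [exact h|]. apply IH.
  destruct (lcs1_preimage _ h) as [c [hc e]]. apply phi_inj in e. now subst.
Qed.

Lemma delta_iter_phi_iter m n x : Nat.iter m δ (Nat.iter n phi x) = Nat.iter n phi (Nat.iter m δ x).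
Proof.
  symmetry. apply Nat.iter_swap_gen. intros y. symmetry.
  apply delta_commute; [exact _|]. intros z. symmetry. apply Nat.iter_swap.
Qed.

Fixpoint orbit_prod n y :=
  match n with 0 => one | S n => Nat.iter n phi y ⋅ orbit_prod n y end.

Add Parametric Morphism n j : (orbit_prod n) with signature
  congr_lcs j ==> congr_lcs j as orbit_prod_congr.
Proof.
  intros y y' h. induction n as [|n IH]; simpl; [reflexivity|].
  apply mulg_congr; [now rewrite h | exact IH].
Qed.

Lemma orbit_prod1 n : orbit_prod n one = one.
Proof. induction n as [|n IH]; simpl; [reflexivity | now rewrite IH, (morph1 (Nat.iter n phi)), mulg1]. Qed.

Lemma delta_iter_phi n y : delta (Nat.iter n phi) y = orbit_prod n (δ y).
Proof.
  induction n as [|n IH]; simpl; [apply mulgV|]. rewrite <- IH.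
  unfold delta. rewrite (morphM (f := Nat.iter n phi)), (morphV (Nat.iter n phi)), <- Nat.iter_succ_r.
  gsimpl. reflexivity.
Qed.

Lemma delta_orbit_prod n y : δ (orbit_prod n y) ≡ orbit_prod n (δ y) [mod 1].
Proof.
  induction n as [|n IH]; simpl; [apply congr1_lcs, (delta_lcs phi), lcs_one|].
  rewrite (delta_mul phi 0) by easy. rewrite IH.
  rewrite (delta_commute phi (Nat.iter n phi)); [reflexivity|].
  intros z. symmetry. apply Nat.iter_swap.
Qed.

Section Power.
Variable p : nat.
Local Notation Σ := (orbit_prod p).

Lemma delta_iter_orbit_prod m y : δ (Nat.iter m Σ y) ≡ Nat.iter m Σ (δ y) [mod 1].
Proof. induction m as [|m IH]; simpl; [reflexivity|]. now rewrite delta_orbit_prod, IH. Qed.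

(* Modulo [γ 1], the operator [delta (phi^p)] is [Σ ∘ δ], and [Σ] commutes with [δ]. *)
Lemma delta_pow_iter n x :
  Nat.iter n (delta (Nat.iter p phi)) x ≡ Nat.iter n Σ (Nat.iter n δ x) [mod 1].
Proof.
  induction n as [|n IH]; [reflexivity|]. rewrite !Nat.iter_succ.
  now rewrite delta_iter_phi, IH, delta_iter_orbit_prod.
Qed.

End Power.

Variables (gens : list G) (k : nat).
Hypothesis gens_generate : generates mul inv one gens.
Hypothesis delta_torsion : forall x, exists m, 0 < m /\ γ 1 (Nat.iter k δ x ^+ m).
Local Notation bs := (map (Nat.iter k δ) gens).

Lemma delta_iter_prod_pows M : 0 < M -> (forall b, In b bs -> γ 1 (b ^+ M)) ->
  forall x, exists es, length es = length bs /\ Nat.iter k δ x ≡ prod_pows bs es [mod 1].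
Proof.
  intros hM hb x. generalize (gens_generate x). revert x. apply gen_closed.
  - intros s hs. destruct (prod_pows_mem bs (Nat.iter k δ s)) as [es [he e]]; [now apply in_map|].
    exists es. now rewrite <- e.
  - exists (repeat 0 (length bs)). now rewrite repeat_length, prod_pows0, (delta_iter1 phi).
  - intros x y [es [he hx]] [es' [he' hy]]. exists (vec_add es es').
    split; [rewrite length_vec_add; congruence|].
    now rewrite (delta_iter_mul phi k 0), hx, hy, prod_powsD.
  - intros x [es [he hx]]. exists (map (fun e => e * (M - 1)) es).
    split; [now rewrite length_map|].
    now rewrite (delta_iter_inv phi k 0), hx, (prod_powsV M).
Qed.

(* The classes of [δ^k x] modulo [γ 1] form a finite set. *)
Lemma delta_iter_coords : exists M, forall x, exists es,
  In es (tuples (seq 0 M) (length bs)) /\ Nat.iter k δ x ≡ prod_pows bs es [mod 1].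
Proof.
  destruct (lcs1_uniform_exponent bs) as [M [hM hb]].
  { intros b hb. apply in_map_iff in hb as [s [<- _]]. apply delta_torsion. }
  exists M. intros x. destruct (delta_iter_prod_pows M hM hb x) as [es [he hx]].
  exists (map (fun e => e mod M) es). split.
  - apply tuples_complete; [now rewrite length_map|].
    intros e' he'. apply in_map_iff in he' as [e [<- _]]. apply in_seq.
    pose proof (Nat.mod_upper_bound e M). lia.
  - now rewrite hx, (prod_pows_mod M).
Qed.

Lemma delta_iter_periodic_gens :
  exists p, 0 < p /\ forall s, In s gens -> Nat.iter p phi (Nat.iter k δ s) ≡ Nat.iter k δ s [mod 1].
Proof.
  destruct delta_iter_coords as [M hM].
  destruct (functional_choice _ hM) as [coords hcoords].
  set (E n := map (fun s => coords (Nat.iter n phi s)) gens).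
  destruct (pigeonhole E (tuples (tuples (seq 0 M) (length bs)) (length gens)))
    as [n1 [n2 [hlt hE]]].
  { intros n. apply tuples_complete; [apply length_map|].
    intros t ht. apply in_map_iff in ht as [s [<- _]]. apply hcoords. }
  exists (n2 - n1). split; [lia|]. intros s hs.
  apply (iter_congr1_inj n1). rewrite <- Nat.iter_add.
  replace (n1 + (n2 - n1)) with n2 by lia.
  rewrite <- !delta_iter_phi_iter, !(proj2 (hcoords _)).
  apply map_ext_in_iff with (a := s) in hE; [|exact hs]. now rewrite hE.
Qed.

Lemma delta_iter_periodic :
  exists p, 0 < p /\ forall x, Nat.iter p phi (Nat.iter k δ x) ≡ Nat.iter k δ x [mod 1].
Proof.
  destruct delta_iter_periodic_gens as [p [hp hgens]]. exists p. split; [exact hp|].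
  intros x. generalize (gens_generate x). revert x. apply gen_closed.
  - exact hgens.
  - now rewrite (delta_iter1 phi), (morph1 (Nat.iter p phi)).
  - intros x y hx hy. rewrite (delta_iter_mul phi k 0 x y I), morphM. now rewrite hx, hy.
  - intros x hx. rewrite (delta_iter_inv phi k 0 x I), (morphV (Nat.iter p phi)). now rewrite hx.
Qed.

Lemma unipotent_power :
  exists p, 0 < p /\ forall x, γ 1 (Nat.iter (S k) (delta (Nat.iter p phi)) x).
Proof.
  destruct delta_iter_periodic as [p [hp hper]]. exists p. split; [exact hp|].
  intros x. apply congr1_lcs.
  rewrite delta_pow_iter, Nat.iter_succ_r, Nat.iter_succ, <- delta_iter_phi.
  assert (hfix : delta (Nat.iter p phi) (Nat.iter k δ x) ≡ one [mod 1])
    by (unfold delta at 1; now rewrite hper, mulgV).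
  rewrite hfix. now rewrite iter_fixed by apply orbit_prod1.
Qed.

End Automorphism.

(** * Polynomial growth *)

Lemma pow_succ_add_le n R : (n + 1) ^ S R + (n + 1) ^ R <= (S n + 1) ^ S R.
Proof.
  assert (h : (n + 1) ^ R <= (S n + 1) ^ R) by (apply Nat.pow_le_mono_l; lia).
  rewrite !Nat.pow_succ_r'. nia.
Qed.

Section WordLength.
Variables (gens : list G) (len : G -> nat).
Hypothesis len_spec : forall g, is_word_length mul inv one gens g (len g).

Lemma eval_word_cat w1 w2 :
  eval_word mul inv one (w1 ++ w2) = eval_word mul inv one w1 ⋅ eval_word mul inv one w2.
Proof. induction w1 as [|l w1 IH]; simpl; [now rewrite mul1g | now rewrite IH, mulgA]. Qed.

Lemma len_mul x y : len (x ⋅ y) <= len x + len y.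
Proof.
  destruct (len_spec x) as [[w1 [o1 [e1 <-]]] _], (len_spec y) as [[w2 [o2 [e2 <-]]] _].
  rewrite <- length_app. apply (len_spec (x ⋅ y)).
  - intros l hl. apply in_app_or in hl as [hl|hl]; auto.
  - now rewrite eval_word_cat, e1, e2.
Qed.

Lemma len1 : len one = 0.
Proof.
  destruct (len_spec one) as [_ hmin].
  enough (len one <= 0) by lia. now apply (hmin nil).
Qed.

Lemma len_gt0 x : x <> one -> 0 < len x.
Proof. intros hx. destruct (len_spec x) as [[[|l w] [_ [e <-]]] _]; [now subst x | simpl; lia]. Qed.

Lemma len_iter_poly f `{morphism f} R x : Nat.iter R (delta f) x = one ->
  exists C, forall n, len (Nat.iter n f x) <= C * (n + 1) ^ R.
Proof.
  revert x. induction R as [|R IH]; intros x hx.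
  - exists 0. intros n. simpl in hx. subst x.
    now rewrite iter_fixed, len1 by apply (morph1 f).
  - rewrite Nat.iter_succ_r in hx. destruct (IH _ hx) as [C hC].
    exists (len x + C). intros n. induction n as [|n IHn]; [rewrite Nat.pow_1_l; simpl; lia|].
    rewrite Nat.iter_succ_r, (morph_delta f x), (morphM (f := Nat.iter n f)).
    eapply Nat.le_trans; [apply len_mul|].
    pose proof (pow_succ_add_le n R) as hpow. specialize (hC n).
    set (a := (n + 1) ^ R) in *. set (b := (n + 1) ^ S R) in *.
    set (c := (S n + 1) ^ S R) in *. nia.
Qed.

End WordLength.

Lemma unipotent_polynomial_growth gens len phi :
  generates mul inv one gens -> nilpotent mul inv one -> is_automorphism mul phi ->
  H1Q_unipotent mul inv one phi -> (forall g, is_word_length mul inv one gens g (len g)) ->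
  forall s, exists C D, forall n, len (Nat.iter n phi s) <= C * (n + 1) ^ D.
Proof.
  intros hgen [c hc] [hmorph [hinj hsurj]] [k hk] hlen s.
  assert (phi_morph : morphism phi) by exact hmorph.
  destruct (unipotent_power phi hinj hsurj gens k hgen hk) as [p [hp hpow]].
  destruct (delta_iter_lcs_all (Nat.iter p phi) (S k) hpow c) as [R hR].
  (* With [ψ = φ^p] we have [φ^(q p + r) s = ψ^q (φ^r s)], so the [p] orbits [r < p] are
     bounded uniformly. *)
  destruct (uniform_bound_lt (fun r C => forall q,
      len (Nat.iter q (Nat.iter p phi) (Nat.iter r phi s)) <= C * (q + 1) ^ R)) with p as [C hC].
  - intros r C0 C1 hle h q. specialize (h q). nia.
  - intros r. apply (len_iter_poly gens len hlen (Nat.iter p phi)), hc, hR.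
  - exists C, R. intros n.
    assert (hn : n = n / p * p + n mod p) by (rewrite Nat.mul_comm; apply Nat.div_mod_eq).
    assert (hq : n / p <= n) by (apply Nat.Div0.div_le_upper_bound; nia).
    rewrite hn, iter_mul_add, <- hn.
    eapply Nat.le_trans; [apply hC, Nat.mod_upper_bound; lia|].
    apply Nat.mul_le_mono_l, Nat.pow_le_mono_l. lia.
Qed.

End Group.

(** * Roots of polynomially bounded sequences *)

Local Open Scope R_scope.

Lemma ln_INR_nonneg m : (1 <= m)%nat -> 0 <= ln (INR m).
Proof. intros h. rewrite <- ln_1. apply ln_le; [lra | apply (le_INR 1), h]. Qed.

Lemma is_lim_seq_inv_INR : is_lim_seq (fun n => / INR n) 0.
Proof. exact (is_lim_seq_inv INR p_infty is_lim_seq_INR ltac:(discriminate)). Qed.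

Lemma is_lim_seq_ln_div_INR : is_lim_seq (fun n => ln (INR (S n)) / INR (S n)) 0.
Proof.
  apply (is_lim_comp_seq (fun y => ln y / y) (fun n => INR (S n)) p_infty 0).
  - apply is_lim_div_ln_p.
  - exists 0%nat. intros n _. discriminate.
  - apply (is_lim_seq_incr_1 INR p_infty), is_lim_seq_INR.
Qed.

Lemma ln_poly_div_le a C D n : (1 <= n)%nat -> (1 <= a)%nat -> (a <= C * (n + 1) ^ D)%nat ->
  ln (INR a) / INR n <= ln (INR C) * / INR n + 2 * INR D * (ln (INR (S n)) / INR (S n)).
Proof.
  intros hn ha haC.
  assert (hn' : 1 <= INR n) by now apply (le_INR 1).
  assert (hC : (1 <= C)%nat) by (destruct C; simpl in haC; lia).
  assert (hlnC : 0 <= ln (INR C)) by now apply ln_INR_nonneg.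
  assert (hlnS : 0 <= ln (INR (S n))) by (apply ln_INR_nonneg; lia).
  assert (hD : 0 <= INR D) by apply pos_INR.
  assert (hln : ln (INR a) <= ln (INR C) + INR D * ln (INR (S n))).
  { rewrite <- ln_pow, <- ln_mult by (try apply pow_lt; apply lt_0_INR; lia).
    apply ln_le; [apply lt_0_INR; lia|].
    rewrite <- pow_INR, <- mult_INR. apply le_INR. now replace (S n) with (n + 1)%nat by lia. }
  assert (hinv : / INR n <= 2 * / INR (S n)).
  { rewrite S_INR. apply (Rmult_le_reg_l (INR n * (INR n + 1))); [nra|].
    field_simplify; lra. }
  unfold Rdiv. apply Rle_trans with ((ln (INR C) + INR D * ln (INR (S n))) * / INR n).
  - apply Rmult_le_compat_r; [left; apply Rinv_0_lt_compat; lra | exact hln].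
  - rewrite Rmult_plus_distr_r. apply Rplus_le_compat_l.
    replace (2 * INR D * (ln (INR (S n)) * / INR (S n)))
      with (INR D * ln (INR (S n)) * (2 * / INR (S n))) by ring.
    apply Rmult_le_compat_l; [apply Rmult_le_pos|]; assumption.
Qed.

Lemma root_of_poly_bounded (a : nat -> nat) (C D : nat) :
  (forall n, (1 <= a n)%nat) -> (forall n, (a n <= C * (n + 1) ^ D)%nat) ->
  Un_cv (fun n => Rpower (INR (a n)) (/ INR n)) 1.
Proof.
  intros h1 h2.
  assert (hv : is_lim_seq (fun n => ln (INR (a n)) / INR n) 0).
  { apply is_lim_seq_le_le_loc with (u := fun _ => 0)
      (w := fun n => ln (INR C) * / INR n + 2 * INR D * (ln (INR (S n)) / INR (S n))).
    - exists 1%nat. intros n hn. split; [|now apply ln_poly_div_le].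
      unfold Rdiv. apply Rmult_le_pos; [now apply ln_INR_nonneg|].
      left. apply Rinv_0_lt_compat, lt_0_INR. lia.
    - apply is_lim_seq_const.
    - replace (Finite 0) with (Finite (ln (INR C) * 0 + 2 * INR D * 0)) by (f_equal; ring).
      apply is_lim_seq_plus'.
      + apply (is_lim_seq_scal_l _ _ 0), is_lim_seq_inv_INR.
      + apply (is_lim_seq_scal_l _ _ 0), is_lim_seq_ln_div_INR. }
  apply is_lim_seq_Reals.
  apply is_lim_seq_ext with (u := fun n => exp (ln (INR (a n)) / INR n)).
  - intros n. unfold Rpower, Rdiv. f_equal. ring.
  - rewrite <- exp_0. apply is_lim_seq_continuous; [|exact hv].
    apply derivable_continuous_pt, derivable_pt_exp.
Qed.

Theorem corollary1p5
  (N : Type) (mul : N -> N -> N) (inv : N -> N) (one : N)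
  (HN : is_group mul inv one)
  (S : list N) (HS : generates mul inv one S)
  (Hnil : nilpotent mul inv one)
  (Htf : torsion_free mul one)
  (phi : N -> N) (Hphi : is_automorphism mul phi)
  (Hunip : H1Q_unipotent mul inv one phi)
  (len : N -> nat) (Hlen : forall g, is_word_length mul inv one S g (len g)) :
  forall s, In s S -> s <> one ->
    Un_cv (fun n => Rpower (INR (len (Nat.iter n phi s))) (/ INR n)) 1.
Proof.
  intros s _ hs.
  destruct (unipotent_polynomial_growth N mul inv one HN S len phi HS Hnil Hphi Hunip Hlen s)
    as [C [D hCD]].
  apply (root_of_poly_bounded _ C D); [|exact hCD].
  intros n. destruct Hphi as [hmorph [hinj _]].
  apply (len_gt0 N mul inv one S len Hlen).
  exact (@iter_inj_neq1 N mul inv one HN phi hmorph n s hinj hs).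
Qed.
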